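(* Let $\alpha=1/2$. (i) For every $(x,y)\in[0,1]^2$ with $x+y\ge 1$ we have $G_{1/2}(x,y)=(y,2-x-y)$, $G_{1/2}^2(x,y)=(2-x-y,x)$ and $G_{1/2}^3(x,y)=(x,y)$; in particular every such point is periodic with period $3$ except the fixed point $(2/3,2/3)$. The only fixed points of $G_{1/2}$ in $[0,1]^2$ are $(0,0)$ and $(2/3,2/3)$. (ii) For every $(x,y)\in[0,1]^2\setminus\{(0,0)\}$ there is $n\ge 0$ such that $G_{1/2}^n(x,y)=(u,v)$ satisfies $u+v\ge 1$; hence every point other than $(0,0)$ is periodic of period $3$, or fixed, or eventually periodic of period $3$ or eventually fixed.
   Context: Let $\tau:[0,1]\to[0,1]$ be the symmetric tent map, $\tau(x)=2x$ for $0\le x<1/2$ and $\tau(x)=2-2x$ for $1/2\le x\le 1$. For $0<\alpha<1$ define $G_\alpha:[0,1]^2\to[0,1]^2$ by $G_\alpha(x,y)=(y,\tau(\alpha y+(1-\alpha)x))$. *)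

From Stdlib Require Import Reals Lra.
Open Scope R_scope.

Definition tau (x : R) : R :=
  if Rlt_dec x (1/2) then 2 * x else 2 - 2 * x.

Definition G (alpha : R) (p : R * R) : R * R :=
  (snd p, tau (alpha * snd p + (1 - alpha) * fst p)).

Definition Giter (alpha : R) (n : nat) (p : R * R) : R * R :=
  Nat.iter n (G alpha) p.

Definition in_square (p : R * R) : Prop :=
  0 <= fst p <= 1 /\ 0 <= snd p <= 1.

Definition period3 (alpha : R) (q : R * R) : Prop :=
  Giter alpha 3 q = q /\ G alpha q <> q /\ Giter alpha 2 q <> q.

(* Above the anti-diagonal x + y >= 1 the map G_(1/2) is the affine rotation
   (x, y) |-> (y, 2 - x - y) of order 3 about (2/3, 2/3).  Below it, G_(1/2) is
   the Fibonacci step (x, y) |-> (y, x + y), which at least doubles the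
   coordinate sum every two steps; so every orbit except that of (0, 0)
   eventually reaches the region x + y >= 1. *)

From Stdlib Require Import Reals Lra.
Open Scope R_scope.

Lemma G_half_upper x y : x + y >= 1 -> G (1/2) (x, y) = (y, 2 - x - y).
Proof. intros Hxy; unfold G, tau; simpl; destruct Rlt_dec; [lra | f_equal; lra]. Qed.

Lemma G_half_lower x y : x + y < 1 -> G (1/2) (x, y) = (y, x + y).
Proof. intros Hxy; unfold G, tau; simpl; destruct Rlt_dec; [f_equal; lra | lra]. Qed.

Lemma G_half_in_square p : in_square p -> in_square (G (1/2) p).
Proof.
  destruct p as [x y]; intros [Hx Hy]; simpl in Hx, Hy.
  destruct (Rlt_dec (x + y) 1).
  - rewrite G_half_lower by lra; split; simpl; lra.
  - rewrite G_half_upper by lra; split; simpl; lra.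
Qed.

Lemma Giter_half_in_square n p : in_square p -> in_square (Giter (1/2) n p).
Proof. intros Hs; induction n as [|n IH]; [exact Hs | exact (G_half_in_square _ IH)]. Qed.

Lemma Giter_half_upper_2 x y : in_square (x, y) -> x + y >= 1 ->
  Giter (1/2) 2 (x, y) = (2 - x - y, x).
Proof.
  unfold in_square; simpl; intros Hs Hxy.
  change (G (1/2) (G (1/2) (x, y)) = (2 - x - y, x)).
  rewrite G_half_upper, G_half_upper by lra; f_equal; lra.
Qed.

Lemma Giter_half_upper_3 x y : in_square (x, y) -> x + y >= 1 ->
  Giter (1/2) 3 (x, y) = (x, y).
Proof.
  unfold in_square; simpl; intros Hs Hxy.
  change (G (1/2) (Giter (1/2) 2 (x, y)) = (x, y)).
  rewrite Giter_half_upper_2 by (unfold in_square; simpl; lra).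
  rewrite G_half_upper by lra; f_equal; lra.
Qed.

Lemma G_half_fixed_iff p : in_square p ->
  (G (1/2) p = p <-> p = (0, 0) \/ p = (2/3, 2/3)).
Proof.
  destruct p as [x y]; unfold in_square; simpl; intros Hs; split.
  - unfold G, tau; simpl; destruct Rlt_dec; intros [= Hy Hx].
    + left; f_equal; lra.
    + right; f_equal; lra.
  - intros [[= -> ->] | [= -> ->]].
    + rewrite G_half_lower by lra; f_equal; lra.
    + rewrite G_half_upper by lra; f_equal; lra.
Qed.

Lemma period3_half_upper x y : in_square (x, y) -> x + y >= 1 ->
  (x, y) <> (2/3, 2/3) -> period3 (1/2) (x, y).
Proof.
  intros Hs Hxy Hne; unfold period3.
  rewrite Giter_half_upper_3, Giter_half_upper_2, G_half_upper by assumption.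
  split; [reflexivity | split]; intros [= Hy Hx]; apply Hne; f_equal; lra.
Qed.

Lemma G_half_upper_fixed_or_period3 p : in_square p -> fst p + snd p >= 1 ->
  G (1/2) p = p \/ period3 (1/2) p.
Proof.
  destruct p as [x y]; simpl; intros Hs Hxy.
  destruct (Req_dec x (2/3)) as [-> | Hx]; [destruct (Req_dec y (2/3)) as [-> | Hy] |].
  - left; apply G_half_fixed_iff; auto.
  - right; apply period3_half_upper; auto; intros [= Hy']; exact (Hy Hy').
  - right; apply period3_half_upper; auto; intros [= Hx' _]; exact (Hx Hx').
Qed.

Lemma Giter_half_reaches_upper_of_sum_ge k : forall x y, in_square (x, y) ->
  x + y >= / 2 ^ k ->
  exists n, fst (Giter (1/2) n (x, y)) + snd (Giter (1/2) n (x, y)) >= 1.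
Proof.
  induction k as [|k IH]; intros x y Hs Hsum.
  - exists 0%nat; simpl in *; lra.
  - pose proof Hs as [Hx Hy]; simpl in Hx, Hy.
    destruct (Rlt_dec (x + y) 1) as [Hlt | Hge]; [| exists 0%nat; simpl; lra].
    destruct (Rlt_dec (y + (x + y)) 1) as [Hlt2 | Hge2].
    + assert (Hiter2 : Giter (1/2) 2 (x, y) = (x + y, y + (x + y))).
      { change (G (1/2) (G (1/2) (x, y)) = (x + y, y + (x + y))).
        rewrite G_half_lower, G_half_lower by lra; reflexivity. }
      (* two Fibonacci steps turn the sum x + y into 2x + 3y >= 2 (x + y) *)
      assert (Hpow : 0 < 2 ^ k) by (apply pow_lt; lra).
      simpl in Hsum; rewrite Rinv_mult in Hsum.
      destruct (IH (x + y) (y + (x + y))) as [n Hn];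
        [unfold in_square; simpl; lra | lra |].
      exists (n + 2)%nat; unfold Giter in *; rewrite Nat.iter_add, Hiter2; exact Hn.
    + exists 1%nat; change (fst (G (1/2) (x, y)) + snd (G (1/2) (x, y)) >= 1).
      rewrite G_half_lower by lra; simpl; lra.
Qed.

Lemma Giter_half_reaches_upper p : in_square p -> p <> (0, 0) ->
  exists n, fst (Giter (1/2) n p) + snd (Giter (1/2) n p) >= 1.
Proof.
  destruct p as [x y]; intros Hs Hne; pose proof Hs as [Hx Hy]; simpl in Hx, Hy.
  assert (Hpos : 0 < x + y).
  { destruct (Req_dec x 0) as [-> | ]; [destruct (Req_dec y 0) as [-> | ] |];
    [now elim Hne | lra | lra]. }
  destruct (Pow_x_infinity 2 ltac:(rewrite Rabs_pos_eq; lra) (/ (x + y))) as [k Hk].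
  specialize (Hk k (le_n k)); rewrite Rabs_pos_eq in Hk by (apply pow_le; lra).
  apply (Giter_half_reaches_upper_of_sum_ge k); auto.
  rewrite <- (Rinv_inv (x + y)); apply Rle_ge, Rinv_le_contravar;
    [apply Rinv_0_lt_compat |]; lra.
Qed.

Theorem mainTheorem5 :
  (* (i) *)
  (forall x y : R, in_square (x, y) -> x + y >= 1 ->
     G (1/2) (x, y) = (y, 2 - x - y) /\
     Giter (1/2) 2 (x, y) = (2 - x - y, x) /\
     Giter (1/2) 3 (x, y) = (x, y) /\
     ((x, y) <> (2/3, 2/3) -> period3 (1/2) (x, y))) /\
  (forall p : R * R, in_square p ->
     (G (1/2) p = p <-> p = (0, 0) \/ p = (2/3, 2/3))) /\
  (* (ii) *)
  (forall p : R * R, in_square p -> p <> (0, 0) ->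
     exists n : nat, fst (Giter (1/2) n p) + snd (Giter (1/2) n p) >= 1) /\
  (forall p : R * R, in_square p -> p <> (0, 0) ->
     exists n : nat,
       G (1/2) (Giter (1/2) n p) = Giter (1/2) n p \/
       period3 (1/2) (Giter (1/2) n p)).
Proof.
  split; [| split; [| split]].
  - intros x y Hs Hxy.
    exact (conj (G_half_upper x y Hxy) (conj (Giter_half_upper_2 x y Hs Hxy)
             (conj (Giter_half_upper_3 x y Hs Hxy) (period3_half_upper x y Hs Hxy)))).
  - exact G_half_fixed_iff.
  - exact Giter_half_reaches_upper.
  - intros p Hs Hne; destruct (Giter_half_reaches_upper p Hs Hne) as [n Hn].
    exists n; exact (G_half_upper_fixed_or_period3 _ (Giter_half_in_square n p Hs) Hn).
Qed.
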